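(* Assume $k>1$. (1) $r=e-k$ if and only if $v(R)\setminus v(xR:\mathfrak m)=\{0,y_1,\dots,y_{k-1}\}$. (2) If $r<e-1$, then (a) $2y_1<c+e$, and (b) $p\le 2l_1+2$, and $p=2l_1+2$ implies $h>0$. (3) If $r=e-k$, then (a) $y_1+y_j<c+e$ for every $j=1,\dots,k-1$, and (b) $p\le l_1+l_{k-1}+2$, and $p=l_1+l_{k-1}+2$ implies $h>0$. (4) If $p\ge3$ and $i$ is such that $l_i=0$, then $2y_i>c+e$.
   Context: Let $(R,\mathfrak m)$ be a one-dimensional local Noetherian domain with quotient field $K$, not regular, analytically irreducible (the integral closure $\overline R$ of $R$ in $K$ is a DVR and a finite $R$-module) and residually rational. Let $v$ be the valuation of $\overline R$ normalized so a uniformizer $t$ has value 1, $v(R)=\{v(a):a\in R\setminus\{0\}\}$, $\mathfrak C=(R:_K\overline R)=t^c\overline R$ with $c$ the least element of $v(R)$ with $c+\mathbb N\subseteq v(R)$, $r=\ell_R((R:_K\mathfrak m)/R)$, $e$ the least positive element of $v(R)$. Let $x\in\mathfrak m$ with $v(x)=e$, $k=\ell_R(R/(\mathfrak C+xR))$, $(xR:\mathfrak m)=\{a\in K:a\mathfrak m\subseteq xR\}$ (an ideal of $R$) with value set $v(xR:\mathfrak m)$. When $k>1$: $p$ is the integer with $c-e\le pe<c$, $h=(p+1)e-c$; $y_1<\dots<y_{k-1}$ are the nonzero elements of $v(R)\setminus v(\mathfrak C+xR)$ (equivalently the $y\in v(R)$ with $0<y<c$ and $y-e\notin v(R)$); $l_i\ge0$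 is the integer with $y_i+l_ie<c\le y_i+(l_i+1)e$. *)

From HB Require Import structures.
From mathcomp Require Import all_boot all_order all_algebra.
Set Implicit Arguments. Unset Strict Implicit. Unset Printing Implicit Defensive.
Import Order.TTheory GRing.Theory Num.Theory.
Local Open Scope ring_scope.

(* v is a discrete valuation of K normalized so that some t has value 1
   (the value v 0 is irrelevant and never used). *)
Definition is_dval (K : fieldType) (v : K -> int) : Prop :=
  [/\ (forall a b, a != 0 -> b != 0 -> v (a * b) = v a + v b),
      (forall a b, a != 0 -> b != 0 -> a + b != 0 ->
          Num.min (v a) (v b) <= v (a + b)) &
      (exists t, t != 0 /\ v t = 1)].

(* the valuation ring of v (this is \overline R, a DVR) *)
Definition valring (K : fieldType) (v : K -> int) : K -> Prop :=
  fun a => a = 0 \/ 0 <= v a.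

Definition is_subring (K : fieldType) (R : K -> Prop) : Prop :=
  [/\ R 0, R 1, (forall a b, R a -> R b -> R (a - b)) &
      (forall a b, R a -> R b -> R (a * b))].

Definition fin_gen_module (K : fieldType) (R M : K -> Prop) : Prop :=
  exists s : seq K, (forall g, g \in s -> M g) /\
    forall a, M a -> exists f : nat -> K,
      (forall i, R (f i)) /\ a = \sum_(i < size s) f i * s`_i.

(* The standing setting: R is a subring of the DVR \overline R = valring v,
   with quotient field K, \overline R finite over R, R <> \overline R
   (not regular), and residually rational. *)
Definition setting (K : fieldType) (v : K -> int) (R : K -> Prop) : Prop :=
  [/\ is_dval v, is_subring R, (forall a, R a -> valring v a),
      (forall z, exists a b, [/\ R a, R b, b != 0 & z = a / b]) &
      [/\ fin_gen_module R (valring v),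
          (exists a, valring v a /\ ~ R a) &
          (forall a, valring v a -> exists b, R b /\ (a - b = 0 \/ 0 < v (a - b)))]].

(* maximal ideal of R: R ∩ (maximal ideal of \overline R) *)
Definition maxid (K : fieldType) (v : K -> int) (R : K -> Prop) : K -> Prop :=
  fun a => R a /\ (a = 0 \/ 0 < v a).

Definition colon (K : fieldType) (I J : K -> Prop) : K -> Prop :=
  fun a => forall b, J b -> I (a * b).

Definition conductor (K : fieldType) (v : K -> int) (R : K -> Prop) : K -> Prop :=
  colon R (valring v).

Definition principal (K : fieldType) (R : K -> Prop) (x : K) : K -> Prop :=
  fun a => exists b, R b /\ a = x * b.

Definition sumset (K : fieldType) (I J : K -> Prop) : K -> Prop :=
  fun a => exists b d, [/\ I b, J d & a = b + d].

Definition vset (K : fieldType) (v : K -> int) (I : K -> Prop) : int -> Prop :=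
  fun z => exists a, [/\ I a, a != 0 & v a = z].

Definition is_submod (K : fieldType) (R M : K -> Prop) : Prop :=
  [/\ M 0, (forall a b, M a -> M b -> M (a + b)) &
      (forall r a, R r -> M a -> M (r * a))].

Definition is_chain (K : fieldType) (R J I : K -> Prop) (n : nat)
    (f : nat -> K -> Prop) : Prop :=
  [/\ (forall a, f 0%N a <-> J a), (forall a, f n a <-> I a),
      (forall i, (i <= n)%N -> is_submod R (f i)) &
      (forall i, (i < n)%N ->
         (forall a, f i a -> f i.+1 a) /\ exists a, f i.+1 a /\ ~ f i a)].

(* length of the R-module I/J (J ⊆ I submodules of K) is n:
   the maximal length of a strict chain of submodules between J and I *)
Definition module_length (K : fieldType) (R I J : K -> Prop) (n : nat) : Prop :=
  (exists f, is_chain R J I n f) /\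
  (forall m f, is_chain R J I m f -> (m <= n)%N).

(* For R-submodules J ⊆ I of K, the length of I/J is the number of values in
   v(I) \ v(J), since by residual rationality two modules with the same values
   coincide.  Hence r = |v(R :_K m) \ v(R)| and k = |{0, y_1, ..., y_(k-1)}|.
   The Apery set {z ∈ v(R) : z - e ∉ v(R)} has e elements, and splitting it
   according to whether z - e ∈ v(R :_K m) gives e = r + |S| with
   S = v(R) \ v(xR :_K m).  As C + xR ⊆ xR :_K m, S ⊆ {0, y_1, ..., y_(k-1)},
   which is (1).  Every element of m is congruent modulo xR to an element of value
   at least y_1, so z ∈ v(R) lies in v(xR :_K m) as soon as z + y_1 ≥ c + e;
   thus y_i ∈ S forces y_1 + y_i < c + e, and (2)-(4) follow by arithmetic from the
   definitions of p and l_i. *)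

From HB Require Import structures.
From mathcomp Require Import all_boot all_order all_algebra.
From mathcomp Require Import zify ring.
From mathcomp Require Import boolp.
Set Implicit Arguments. Unset Strict Implicit. Unset Printing Implicit Defensive.
Import Order.TTheory GRing.Theory Num.Theory.
Local Open Scope ring_scope.

Section Valuation.

Variables (K : fieldType) (v : K -> int).
Hypothesis hv : is_dval v.

Lemma dvalM a b : a != 0 -> b != 0 -> v (a * b) = v a + v b.
Proof. by case: hv => hM _ _; apply: hM. Qed.

Lemma dval1 : v 1 = 0.
Proof. by have := @dvalM 1 1 (oner_neq0 _) (oner_neq0 _); rewrite mulr1 => h; lia. Qed.

Lemma dvalV a : a != 0 -> v a^-1 = - v a.
Proof.
by move=> a0; have := dvalM a0 (invr_neq0 a0); rewrite mulfV // dval1; lia.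
Qed.

Lemma dvalMV a b : a != 0 -> b != 0 -> v (a / b) = v a - v b.
Proof. by move=> a0 b0; rewrite dvalM ?invr_eq0 // dvalV. Qed.

Lemma dvalN a : v (- a) = v a.
Proof.
have [->|a0] := eqVneq a 0; first by rewrite oppr0.
have m10 : (-1 : K) != 0 by rewrite oppr_eq0 oner_neq0.
have vm1 : v (-1) = 0 by have := dvalM m10 m10; rewrite mulrNN mulr1 dval1; lia.
by rewrite -mulN1r dvalM // vm1 add0r.
Qed.

Lemma dvalD_ge (s : int) a b : a + b != 0 ->
  (a = 0 \/ s <= v a) -> (b = 0 \/ s <= v b) -> s <= v (a + b).
Proof.
move=> ab0 [a0|ha] [b0|hb].
- by move: ab0; rewrite a0 b0 addr0 eqxx.
- by rewrite a0 add0r.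
- by rewrite b0 addr0.
have [a0|a0] := eqVneq a 0; first by rewrite a0 add0r.
have [b0|b0] := eqVneq b 0; first by rewrite b0 addr0.
case: hv => _ hD _; apply: le_trans (hD _ _ a0 b0 ab0); by rewrite le_min ha hb.
Qed.

Lemma dvalD_lt a b : a != 0 -> (b = 0 \/ v a < v b) -> a + b != 0 /\ v (a + b) = v a.
Proof.
move=> a0 [->|hb]; first by rewrite addr0.
have [->|b0] := eqVneq b 0; first by rewrite addr0.
have ab0 : a + b != 0.
  apply: contraTneq hb => /eqP; rewrite addr_eq0 => /eqP ->.
  by rewrite dvalN ltxx.
split=> //; apply/eqP; rewrite eq_le dvalD_ge /=; [|by []|by right|by right; apply: ltW].
have nb0 : - b != 0 by rewrite oppr_eq0.
case: hv => _ hD _; have := hD _ _ ab0 nb0; rewrite addrK dvalN ge_min => /(_ a0).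
by case/orP => // hba; move: hb; rewrite ltNge hba.
Qed.

Lemma dvalX t (j : nat) : t != 0 -> v t = 1 -> v (t ^+ j) = j%:Z.
Proof.
move=> t0 vt; elim: j => [|j IH]; first by rewrite expr0 dval1.
by rewrite exprS dvalM ?expf_neq0 // IH vt; lia.
Qed.

Lemma valring_div a b : a != 0 -> b != 0 -> v b <= v a -> valring v (a / b).
Proof. by move=> a0 b0 hab; right; rewrite dvalMV // subr_ge0. Qed.

End Valuation.

Section Subring.

Variables (K : fieldType) (R : K -> Prop).
Hypothesis hR : is_subring R.

Lemma subring0 : R 0. Proof. by case: hR. Qed.
Lemma subring1 : R 1. Proof. by case: hR. Qed.

Lemma subringB a b : R a -> R b -> R (a - b).
Proof. by case: hR => _ _ hB _; apply: hB. Qed.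

Lemma subringM a b : R a -> R b -> R (a * b).
Proof. by case: hR => _ _ _ hM; apply: hM. Qed.

Lemma subringN a : R a -> R (- a).
Proof. by move=> ha; rewrite -sub0r; apply: subringB => //; apply: subring0. Qed.

Lemma subringD a b : R a -> R b -> R (a + b).
Proof. by move=> ha hb; rewrite -[b]opprK; apply: subringB => //; apply: subringN. Qed.

Lemma submodB (M : K -> Prop) a b l : is_submod R M -> M a -> M b -> R l -> M (a - l * b).
Proof.
by case=> _ hD hZ ha hb hl; apply: hD => //; rewrite -mulNr; apply: hZ => //; apply: subringN.
Qed.

Lemma subring_submod : is_submod R R.
Proof. by split; [apply: subring0 | apply: subringD | apply: subringM]. Qed.

Lemma colon_submod (J : K -> Prop) : is_submod R (colon R J).
Proof.
split=> [b _|a b ha hb w hw|u a hu ha w hw].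
- by rewrite mul0r; apply: subring0.
- by rewrite mulrDl; apply: subringD; [apply: ha | apply: hb].
- by rewrite -mulrA; apply: subringM => //; apply: ha.
Qed.

Lemma principal_submod (x : K) : is_submod R (principal R x).
Proof.
split=> [|_ _ [a [ha ->]] [b [hb ->]]|u _ hu [a [ha ->]]].
- by exists 0; split; [apply: subring0 | rewrite mulr0].
- by exists (a + b); split; [apply: subringD | rewrite mulrDr].
- by exists (u * a); split; [apply: subringM | rewrite mulrCA].
Qed.

Lemma sumset_submod (I J : K -> Prop) : is_submod R I -> is_submod R J ->
  is_submod R (sumset I J).
Proof.
case=> I0 ID IZ [J0 JD JZ]; split.
- by exists 0, 0; rewrite addr0.
- move=> _ _ [a1 [b1 [h1 h1' ->]]] [a2 [b2 [h2 h2' ->]]].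
  by exists (a1 + a2), (b1 + b2); split; [apply: ID | apply: JD | rewrite addrACA].
- move=> u _ hu [a [b [ha hb ->]]].
  by exists (u * a), (u * b); split; [apply: IZ | apply: JZ | rewrite mulrDr].
Qed.

End Subring.

Section Chains.

Variables (K : fieldType) (R J : K -> Prop).

Lemma chain_mono I n f : is_chain R J I n f ->
  forall i j, (i <= j <= n)%N -> forall a, f i a -> f j a.
Proof.
case=> _ _ _ hs i j /andP[]; elim: j => [|j IH]; first by rewrite leqn0 => /eqP ->.
rewrite leq_eqVlt => /orP[/eqP -> //|]; rewrite ltnS => ij jn a fa.
by have [h _] := hs j jn; apply: h; apply: IH => //; apply: ltnW.
Qed.

Lemma chain_eq_top I I' n f : is_chain R J I n f -> (forall a, I a <-> I' a) ->
  is_chain R J I' n f.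
Proof. by case=> h0 hn hsub hs hII'; split => // a; rewrite hn. Qed.

Lemma chain_extend I I' n f : is_chain R J I n f ->
  (forall a, I a -> I' a) -> (exists a, I' a /\ ~ I a) -> is_submod R I' ->
  is_chain R J I' n.+1 (fun i => if (i <= n)%N then f i else I').
Proof.
case=> h0 hn hsub hs hII' [w [I'w Iw]] hI'; split.
- by move=> a /=; apply: h0.
- by move=> a /=; rewrite ltnn.
- move=> i; rewrite leq_eqVlt => /orP[/eqP ->|]; first by rewrite ltnn.
  by rewrite ltnS => hi; rewrite hi; apply: hsub.
- move=> i; rewrite ltnS leq_eqVlt => /orP[/eqP ->|hi].
    rewrite eqxx ltnn /=; split; first by move=> a /hn; apply: hII'.
    by exists w; split => // /hn.
  by rewrite hi orbT; apply: hs.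
Qed.

End Chains.

Definition count_int (P : int -> Prop) (lo : int) (n : nat) : nat :=
  (\sum_(0 <= i < n) `[< P (lo + i%:Z)%R >])%N.

Section CountInt.

Implicit Types (P Q : int -> Prop) (lo : int) (n : nat).

Lemma count_int0 P lo : count_int P lo 0 = 0%N.
Proof. by rewrite /count_int big_geq. Qed.

Lemma count_intS P lo n :
  count_int P lo n.+1 = (`[< P lo >] + count_int P (lo + 1) n)%N.
Proof.
rewrite /count_int big_nat_recl // addr0; congr (_ + _)%N.
by apply: eq_bigr => i _; congr `[< P _ >]; lia.
Qed.

Lemma count_intSr P lo n :
  count_int P lo n.+1 = (count_int P lo n + `[< P (lo + n%:Z)%R >])%N.
Proof. by rewrite /count_int big_nat_recr. Qed.

Lemma count_int_cat P lo n m :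
  count_int P lo (n + m) = (count_int P lo n + count_int P (lo + n%:Z)%R m)%N.
Proof.
rewrite /count_int (@big_cat_nat _ _ _ n 0 (n + m)) ?leq_addr //=; congr (_ + _)%N.
rewrite -{1}[n]add0n big_addn addKn; apply: eq_bigr => i _.
by congr `[< P _ >]; lia.
Qed.

Lemma count_int_shift P lo d n :
  count_int (fun z => P (z - d)) lo n = count_int P (lo - d) n.
Proof. by rewrite /count_int; apply: eq_bigr => i _; congr `[< P _ >]; lia. Qed.

Lemma eq_count_int P Q lo n : (forall z, lo <= z < lo + n%:Z -> (P z <-> Q z)) ->
  count_int P lo n = count_int Q lo n.
Proof.
move=> hPQ; apply: eq_big_nat => i /andP[_ hi].
have [] := hPQ (lo + i%:Z); first lia.
by move=> hPQi hQPi; congr nat_of_bool; apply/asboolP/asboolP.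
Qed.

Lemma leq_count_int P Q lo n : (forall z, lo <= z < lo + n%:Z -> P z -> Q z) ->
  (count_int P lo n <= count_int Q lo n)%N.
Proof.
move=> hPQ; rewrite /count_int big_seq_cond [X in (_ <= X)%N]big_seq_cond.
apply: leq_sum => i; rewrite mem_iota add0n andbT => /andP[_ hi].
by case: (asboolP (P (lo + i%:Z)%R)) => // /hPQ hQ; rewrite asboolT //; apply: hQ; lia.
Qed.

Lemma count_int_pred0 P lo n : (forall z, lo <= z < lo + n%:Z -> ~ P z) ->
  count_int P lo n = 0%N.
Proof.
move=> hP; rewrite /count_int big1_seq // => i; rewrite mem_iota add0n => /andP[_ hi].
by rewrite asboolF //; apply: hP; lia.
Qed.

Lemma count_int_widen P lo n n' : (n <= n')%N ->
  (forall z, lo + n%:Z <= z < lo + n'%:Z -> ~ P z) -> count_int P lo n' = count_int P lo n.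
Proof.
move=> hn hP; rewrite -(subnKC hn) count_int_cat [X in (_ + X)%N]count_int_pred0 ?addn0 //.
move=> z hz.
by apply: hP; move: hz; rewrite -(subnKC hn); lia.
Qed.

Lemma count_int_split P Q lo n : count_int P lo n =
  (count_int (fun z => P z /\ Q z) lo n + count_int (fun z => P z /\ ~ Q z) lo n)%N.
Proof.
rewrite /count_int -big_split /=; apply: eq_bigr => i _.
case: (asboolP (P (lo + i%:Z)%R)) => hP; last by rewrite !asboolF //; case.
case: (asboolP (Q (lo + i%:Z)%R)) => hQ.
  by rewrite asboolT ?asboolF //; tauto.
by rewrite asboolF ?asboolT //; tauto.
Qed.

Lemma count_int_gt0 P lo n z : lo <= z < lo + n%:Z -> P z -> (0 < count_int P lo n)%N.
Proof.
elim: n => [|n IH] hz Pz; first by lia.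
rewrite count_intSr; have [->|ne] := eqVneq (lo + n%:Z) z; first by rewrite asboolT ?addn1.
by rewrite ltn_addr // IH //; lia.
Qed.

Lemma count_int_exists P lo n : (0 < count_int P lo n)%N ->
  exists z, lo <= z < lo + n%:Z /\ P z.
Proof.
apply: contraPP => hnP; rewrite count_int_pred0 // => z hz Pz.
by apply: hnP; exists z.
Qed.

Lemma ltn_count_int P Q lo n z : (forall z, lo <= z < lo + n%:Z -> P z -> Q z) ->
  lo <= z < lo + n%:Z -> Q z -> ~ P z -> (count_int P lo n < count_int Q lo n)%N.
Proof.
move=> hPQ hz Qz nPz; rewrite (count_int_split Q P).
rewrite (@eq_count_int (fun z => Q z /\ P z) P); last by move=> w /hPQ; tauto.
by rewrite -[X in (X < _)%N]addn0 ltn_add2l; apply: (count_int_gt0 hz).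
Qed.

Lemma count_int_eq_sub P Q lo n : (forall z, lo <= z < lo + n%:Z -> P z -> Q z) ->
  count_int P lo n = count_int Q lo n -> forall z, lo <= z < lo + n%:Z -> Q z -> P z.
Proof.
move=> hPQ hc z hz Qz; apply: contrapT => nPz.
by have := ltn_count_int hPQ hz Qz nPz; rewrite hc ltnn.
Qed.

Lemma count_int_eq_le1 (a : int) lo n : (count_int (eq^~ a) lo n <= 1)%N.
Proof.
elim: n lo => [|n IH] lo; first by rewrite count_int0.
rewrite count_intS; have [->|ne] := eqVneq lo a; last by rewrite asboolF ?IH //; apply/eqP.
by rewrite asboolT // count_int_pred0 // => z hz; lia.
Qed.

Lemma count_int_ge2 P lo n : (2 <= count_int P lo n)%N -> exists2 z, P z & z <> 0.
Proof.
move=> h2.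
have hsplit : count_int P lo n = (count_int (fun z => P z /\ z = 0%R) lo n
    + count_int (fun z => P z /\ z <> 0%R) lo n)%N := count_int_split P (eq^~ 0) lo n.
have hle := @leq_count_int (fun z => P z /\ z = 0) (eq^~ 0) lo n (fun z _ => @proj2 _ _).
have hle1 := count_int_eq_le1 0 lo n.
have /count_int_exists[z [_ [Pz z0]]] :
  (0 < count_int (fun z => P z /\ z <> 0%R) lo n)%N by lia.
by exists z.
Qed.

End CountInt.

Lemma sum_nat_mul_residue (F : nat -> nat) (Q E : nat) :
  (\sum_(0 <= i < Q * E) F i = \sum_(0 <= j < E) \sum_(0 <= n < Q) F (n * E + j))%N.
Proof.
rewrite big_nat_mul [RHS]exchange_big_nat; apply: eq_bigr => n _.
by rewrite mulSn addnC -{1}[(n * E)%N]add0n big_addn addKn; apply: eq_bigr => j _; rewrite addnC.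
Qed.

Definition apery (W : int -> Prop) (e z : int) : Prop := W z /\ ~ W (z - e).

Section Apery.

Variables (W : int -> Prop) (c e : int).
Hypotheses (he : 0 < e) (W0 : W 0) (We : W e)
  (WD : forall a b, W a -> W b -> W (a + b))
  (W_ge0 : forall z, W z -> 0 <= z) (W_ge_c : forall z, c <= z -> W z).

Lemma mulr_nat_mem (n : nat) : W (n%:Z * e).
Proof.
elim: n => [|n IH]; first by rewrite mul0r.
by rewrite (_ : n.+1%:Z * e = n%:Z * e + e); [apply: WD | lia].
Qed.

Lemma apery_residue (j : nat) : (j < (absz e))%N -> exists m : nat,
  [/\ apery W e (j%:Z + m%:Z * e), j%:Z + m%:Z * e < c + e &
      forall n : nat, apery W e (j%:Z + n%:Z * e) -> n = m].
Proof.
move=> hj; have hex : exists n : nat, `[< W (j%:Z + n%:Z * e) >].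
  by exists (absz c); rewrite asboolT //; apply: W_ge_c; nia.
have [m /asboolP Wm minm] := ex_minnP hex.
have nWm : ~ W (j%:Z + m%:Z * e - e).
  case: m Wm minm => [|m] Wm minm; first by move/W_ge0; lia.
  have -> : j%:Z + m.+1%:Z * e - e = j%:Z + m%:Z * e by lia.
  by move=> /asboolT /minm; rewrite ltnn.
exists m; split=> //; first by rewrite ltNge; apply/negP => hge; apply: nWm; apply: W_ge_c; lia.
move=> n [Wn nWn]; have mn : (m <= n)%N by apply: minm; rewrite asboolT.
apply/eqP; rewrite eqn_leq mn /=; rewrite leqNgt; apply/negP => lt_mn; apply: nWn.
have -> : j%:Z + n%:Z * e - e = (j%:Z + m%:Z * e) + (n - m - 1)%N%:Z * e by nia.
by apply: WD => //; apply: mulr_nat_mem.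
Qed.

Lemma apery_count : count_int (apery W e) 0 (absz (c + e)) = absz e.
Proof.
have c0 : 0 <= c by apply: W_ge0; apply: W_ge_c.
pose Q := (absz c).+1.
rewrite -(@count_int_widen _ _ _ (Q * (absz e))); first last.
- by move=> z hz [_]; apply; apply: W_ge_c; lia.
- by nia.
rewrite /count_int sum_nat_mul_residue.
transitivity (\sum_(0 <= j < (absz e)) 1)%N; last by rewrite sum_nat_const_nat subn0 muln1.
apply: eq_big_nat => j /andP[_ hj]; have [m [Am hm uniqm]] := apery_residue hj.
rewrite (eq_big_nat _ _ (F2 := fun n => (n == m) : nat)); last first.
  move=> n _; have -> : (0 + (n * (absz e) + j)%N%:Z)%R = j%:Z + n%:Z * e by lia.
  case: (asboolP (apery W e _)) => [/uniqm ->|hn]; first by rewrite eqxx.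
  by case: eqP => // nm; case: hn; rewrite nm.
rewrite -big_mkcond /= big_nat1_eq ifT //; rewrite /Q; nia.
Qed.

End Apery.

Lemma eq_vset (K : fieldType) (v : K -> int) (M M' : K -> Prop) z :
  (forall a, M a <-> M' a) -> vset v M z <-> vset v M' z.
Proof. by move=> hM; split=> -[a [ha a0 va]]; exists a; split => //; apply/hM. Qed.

Lemma vset_sub (K : fieldType) (v : K -> int) (M M' : K -> Prop) z :
  (forall a, M a -> M' a) -> vset v M z -> vset v M' z.
Proof. by move=> hM [a [ha a0 va]]; exists a; split => //; apply: hM. Qed.

Section LengthFormula.

Variables (K : fieldType) (v : K -> int) (R : K -> Prop).
Hypotheses (hv : is_dval v) (hR : is_subring R) (hRv : forall a, R a -> valring v a)
  (hres : forall a, valring v a -> exists b, R b /\ (a - b = 0 \/ 0 < v (a - b))).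

Lemma subring_value_ge0 a : R a -> a != 0 -> 0 <= v a.
Proof. by move=> /hRv [->|//]; rewrite eqxx. Qed.

Lemma cancel_leading_term a b : a != 0 -> b != 0 -> v b = v a ->
  exists l, R l /\ (a - l * b = 0 \/ v a < v (a - l * b)).
Proof.
move=> a0 b0 vab; have [l [hl hal]] := hres (valring_div hv a0 b0 (ltac:(by rewrite vab))).
exists l; split=> //.
have -> : a - l * b = b * (a / b - l) by rewrite mulrBr mulrCA mulfV // mulr1 mulrC.
have [->|q0] := eqVneq (a / b - l) 0; first by left; rewrite mulr0.
case: hal => [/eqP|hal]; first by rewrite (negbTE q0).
by right; rewrite (dvalM hv) // vab ltrDl.
Qed.

Lemma approx_in_submod (M P : K -> Prop) (hi : int) : is_submod R M ->
  (forall a, a != 0 -> hi <= v a -> M a) ->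
  (forall a b l, P a -> a != 0 -> M b -> b != 0 -> v b = v a -> R l -> P (a - l * b)) ->
  (forall a, P a -> a != 0 -> v a < hi -> vset v M (v a)) ->
  forall a, P a -> M a.
Proof.
move=> hM hhi hP hvs.
suff: forall n : nat, forall a, P a -> a != 0 -> hi - v a <= n%:Z -> M a.
  move=> H a Pa; have [->|a0] := eqVneq a 0; first by case: hM.
  by apply: (H `|hi - v a|%N) => //; lia.
elim=> [|n IH] a Pa a0 ha; first by apply: hhi => //; lia.
have [hav|hav] := lerP hi (v a); first exact: hhi.
have [b [Mb b0 vb]] := hvs a Pa a0 hav.
have [l [hl hal]] := cancel_leading_term a0 b0 vb.
have Mal : M (a - l * b).
  have [->|al0] := eqVneq (a - l * b) 0; first by case: hM.
  case: hal => [/eqP|hal]; first by rewrite (negbTE al0).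
  apply: IH => //; first by apply: hP.
  by move: (v a) (v (a - l * b)) ha hal => x y; lia.
have -> : a = (a - l * b) + l * b by rewrite subrK.
by case: hM => _ hD hZ; apply: hD => //; apply: hZ.
Qed.

Section Window.

Variables (I J : K -> Prop) (lo : int) (N : nat).
Hypotheses (hI : is_submod R I) (hJ : is_submod R J) (hJI : forall a, J a -> I a)
  (hlo : forall a, I a -> a != 0 -> lo <= v a)
  (hhi : forall a, a != 0 -> lo + N%:Z <= v a -> J a).

Let gap z := vset v I z /\ ~ vset v J z.

Lemma chain_length_le_count n f : is_chain R J I n f -> (n <= count_int gap lo N)%N.
Proof.
move=> hc; have hmono := chain_mono hc; case: hc => h0 hn hsub hs.
pose phi i := count_int (vset v (f i)) lo N.
have phi_lt i : (i < n)%N -> (phi i < phi i.+1)%N.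
  move=> lt_in; have [fsub [w [fw nfw]]] := hs i lt_in.
  have sub z : lo <= z < lo + N%:Z -> vset v (f i) z -> vset v (f i.+1) z.
    by move=> _; apply: vset_sub.
  (* Otherwise both modules have the same values in the window, and approximation
     from below forces f i.+1 into f i. *)
  rewrite ltnNge; apply/negP => hle; apply: nfw.
  apply: (approx_in_submod (hsub i (ltnW lt_in)) (hi := lo + N%:Z)) fw.
  - move=> a a0 ha; apply: (hmono 0%N); first by rewrite leq0n ltnW.
    by apply/h0; apply: hhi.
  - by move=> a b l fa _ fb _ _ hl; apply: (submodB hR (hsub _ lt_in) fa (fsub _ fb)).
  - move=> a fa a0 va.
    have fIa : I a by apply/hn; apply: (hmono i.+1) fa; rewrite lt_in leqnn.
    have heq : phi i = phi i.+1 by apply/eqP; rewrite eqn_leq hle andbT; apply: leq_count_int.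
    apply: (count_int_eq_sub sub heq); last by exists a.
    by have := hlo fIa a0; lia.
have phi_ge i : (i <= n)%N -> (phi 0%N + i <= phi i)%N.
  elim: i => [|i IH] hi; first by rewrite addn0.
  by have := phi_lt i hi; have := IH (ltnW hi); lia.
have phi_n : phi n = count_int (vset v I) lo N.
  by apply: eq_count_int => z _; apply: eq_vset.
have phi_0 : phi 0%N = count_int (vset v J) lo N.
  by apply: eq_count_int => z _; apply: eq_vset.
have := phi_ge n (leqnn n); rewrite phi_n phi_0 (count_int_split (vset v I) (vset v J)).
rewrite (@eq_count_int (fun z => vset v I z /\ vset v J z) (vset v J)) //.
  by rewrite /gap; lia.
by move=> z _; split=> [[]//|hJz]; split=> //; apply: vset_sub hJz.
Qed.

(* [above s] is J + {b in I | v b >= s}; lowering s by one enlarges it exactly when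
   s - 1 is a gap, which yields a chain of length the number of gaps. *)
Let above (s : int) a :=
  exists j b, [/\ J j, I b, (b = 0 \/ s <= v b) & a = j + b].

Lemma above_submod s : is_submod R (above s).
Proof.
case: hI => I0 ID IZ; case: hJ => J0 JD JZ; split.
- by exists 0, 0; split => //; [left | rewrite addr0].
- move=> _ _ [j1 [b1 [Jj1 Ib1 hb1 ->]]] [j2 [b2 [Jj2 Ib2 hb2 ->]]].
  exists (j1 + j2), (b1 + b2); split; [exact: JD | exact: ID | | by rewrite addrACA].
  by have [->|nz] := eqVneq (b1 + b2) 0; [left | right; apply: dvalD_ge].
- move=> r _ hr [j [b [Jj Ib hb ->]]].
  exists (r * j), (r * b); split; [exact: JZ | exact: IZ | | by rewrite mulrDr].
  have [->|r0] := eqVneq r 0; first by left; rewrite mul0r.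
  have [->|b0] := eqVneq b 0; first by left; rewrite mulr0.
  case: hb => [/eqP|hb]; first by rewrite (negbTE b0).
  right; rewrite (dvalM hv) //; have := subring_value_ge0 hr r0.
  by move: (v r) (v b) hb => p q; lia.
Qed.

Lemma above_lo a : above lo a <-> I a.
Proof.
split=> [[j [b [Jj Ib _ ->]]]|Ia]; first by case: hI => _ ID _; apply: ID => //; apply: hJI.
exists 0, a; split=> //; [by case: hJ | | by rewrite add0r].
by have [->|a0] := eqVneq a 0; [left | right; apply: hlo].
Qed.

Lemma above_hi a : above (lo + N%:Z) a <-> J a.
Proof.
split=> [[j [b [Jj Ib hb ->]]]|Ja]; last first.
  by exists a, 0; split=> //; [by case: hI | left | rewrite addr0].
case: hJ => _ JD _; apply: JD => //.
have [->|b0] := eqVneq b 0; first by case: hJ.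
by case: hb => [/eqP|hb]; [rewrite (negbTE b0) | apply: hhi].
Qed.

Lemma above_pred s a : above s a -> above (s - 1) a.
Proof.
by case=> j [b [Jj Ib hb ->]]; exists j, b; split=> //; case: hb => [->|hb]; [left | right; lia].
Qed.

Lemma above_step s : gap (s - 1) -> exists a, above (s - 1) a /\ ~ above s a.
Proof.
case=> -[b [Ib b0 vb]] nJ; exists b; split.
  by exists 0, b; split => //; [by case: hJ | right; lia | rewrite add0r].
case=> j [b' [Jj Ib' hb' eb]]; apply: nJ.
have ej : j = b - b' by rewrite eb addrK.
rewrite {}ej in Jj; case: hb' => [b'0|hb'].
  by move: Jj; rewrite b'0 subr0 => Jb; exists b.
have [bb0 vbb] : b - b' != 0 /\ v (b - b') = v b.
  by apply: dvalD_lt => //; right; rewrite (dvalN hv) vb; lia.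
by exists (b - b'); rewrite vbb.
Qed.

Lemma above_same s : ~ gap (s - 1) -> forall a, above (s - 1) a <-> above s a.
Proof.
move=> ngap a; split; last exact: above_pred.
case=> j [b [Jj Ib hb ->]].
have [b0|b0] := eqVneq b 0; first by exists j, b; split => //; left.
case: hb => [/eqP|hb]; first by rewrite (negbTE b0).
have [hsb|hsb] := lerP s (v b); first by exists j, b; split => //; right.
have vbs : v b = s - 1 by lia.
have [j' [Jj' j'0 vj']] : vset v J (s - 1).
  by apply: contrapT => nJ; apply: ngap; split => //; exists b.
have [l [hl hbl]] := cancel_leading_term b0 j'0 (etrans vj' (esym vbs)).
exists (j + l * j'), (b - l * j'); split.
- by case: hJ => _ JD JZ; apply: JD => //; apply: JZ.
- by apply: (submodB hR hI Ib (hJI Jj') hl).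
- by case: hbl => [->|hbl]; [left | right; move: hbl; rewrite vbs ltrBlDr ltzD1].
- by rewrite addrACA subrr addr0.
Qed.

Lemma exists_chain_count : exists f, is_chain R J I (count_int gap lo N) f.
Proof.
suff: forall m, (m <= N)%N -> exists f,
    is_chain R J (above (lo + N%:Z - m%:Z)) (count_int gap (lo + N%:Z - m%:Z) m) f.
  case/(_ N (leqnn N)) => f hf; exists f; move: hf; rewrite addrK => hf.
  by apply: (chain_eq_top hf) => a; apply: above_lo.
elim=> [|m IH] hm.
  by exists (fun _ => J); rewrite count_int0 subr0; split=> // a; rewrite above_hi.
have [f hf] := IH (ltnW hm).
have -> : lo + N%:Z - m.+1%:Z = (lo + N%:Z - m%:Z) - 1 by lia.
move: (lo + N%:Z - m%:Z) hf => s hf; rewrite count_intS subrK.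
have [gs|ngs] := asboolP (gap (s - 1)); last first.
  by exists f; apply: (chain_eq_top hf) => a; rewrite above_same.
exists (fun i => if (i <= count_int gap s m)%N then f i else above (s - 1)).
rewrite add1n; apply: (chain_extend hf); [exact: above_pred | exact: above_step |].
exact: above_submod.
Qed.

Lemma module_length_count n : module_length R I J n -> n = count_int gap lo N.
Proof.
case=> -[f hf] hmax; apply/eqP; rewrite eqn_leq (chain_length_le_count hf) /=.
by have [g hg] := exists_chain_count; apply: hmax hg.
Qed.

End Window.

End LengthFormula.

Lemma quotient_le_of_sum_lt (e c p Y Y' L L' : int) : 0 < e ->
  c - e <= p * e -> p * e < c ->
  c <= Y + (L + 1) * e -> c <= Y' + (L' + 1) * e -> Y + Y' < c + e ->
  p <= L + L' + 2 /\ (p = L + L' + 2 -> 0 < (p + 1) * e - c).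
Proof.
move=> e0 hpl hpu hY hY' hYY.
have : p * e < (L + L' + 3) * e by nia.
rewrite ltr_pM2r // => hp; split; first by lia.
by move=> p_eq; rewrite p_eq; nia.
Qed.

Lemma twice_gt_of_quotient_ge3 (e c p Y : int) : 0 < e -> 3 <= p -> p * e < c ->
  c <= Y + e -> c + e < 2 * Y.
Proof. by move=> *; nia. Qed.

Section Setting.

Variables (K : fieldType) (v : K -> int) (R : K -> Prop) (c e : int) (x : K).
Variables (k : nat) (y : nat -> int) (p : int) (l : nat -> int).
Hypotheses (hv : is_dval v) (hR : is_subring R) (hRv : forall a, R a -> valring v a)
  (hfrac : forall z, exists a b, [/\ R a, R b, b != 0 & z = a / b])
  (hfg : fin_gen_module R (valring v)) (hnreg : exists a, valring v a /\ ~ R a)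
  (hres : forall a, valring v a -> exists b, R b /\ (a - b = 0 \/ 0 < v (a - b))).

Lemma common_denominator (s : seq K) :
  exists d, [/\ R d, d != 0 & forall g, g \in s -> R (d * g)].
Proof.
elim: s => [|g s [d [Rd d0 hd]]].
  by exists 1; split=> //; [apply: (subring1 hR) | apply: oner_neq0].
have [a [b [Ra Rb b0 ->]]] := hfrac g.
exists (d * b); split; [exact: (subringM hR) | by rewrite mulf_neq0 |].
move=> g'; rewrite inE => /orP[/eqP ->|hg].
  by rewrite -mulrA (mulrCA b) mulfV // mulr1; apply: (subringM hR).
by rewrite mulrAC; apply: (subringM hR) => //; apply: hd.
Qed.

(* A common denominator of generators of the finite R-module valring v. *)
Lemma exists_value_bound :
  exists d, [/\ R d, d != 0 & forall a, a != 0 -> v d <= v a -> R a].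
Proof.
case: hfg => s [hs hgen]; have [d [Rd d0 hds]] := common_denominator s.
exists d; split=> // a a0 hda; have [f [Rf fE]] := hgen _ (valring_div hv a0 d0 hda).
have -> : a = d * (a / d) by rewrite mulrCA mulfV // mulr1.
rewrite {}fE mulr_sumr; apply: big_ind => [|u w|i _].
- exact: (subring0 hR).
- exact: (subringD hR).
- by rewrite mulrCA; apply: (subringM hR) => //; apply: hds; apply: mem_nth.
Qed.

Lemma vset_R_ge0 z : vset v R z -> 0 <= z.
Proof. by case=> a [Ra a0 va]; have := subring_value_ge0 hRv Ra a0; rewrite va. Qed.

Hypotheses (hc : vset v R c) (hcge : forall n, c <= n -> vset v R n)
  (hcmin : forall c', vset v R c' -> (forall n, c' <= n -> vset v R n) -> c <= c').

Lemma mem_R_of_value_ge a : a != 0 -> c <= v a -> R a.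
Proof.
move=> a0 ha; have [d [Rd d0 hd]] := exists_value_bound.
apply: (approx_in_submod hv hres (subring_submod hR) (hi := v d)
  (P := fun a => a = 0 \/ c <= v a)) (or_intror ha).
- by move=> w w0 hw; apply: hd.
- move=> w b q hw w0 Rb b0 vb Rq.
  have [->|nz] := eqVneq (w - q * b) 0; first by left.
  right; apply: (dvalD_ge hv nz hw).
  have [->|q0] := eqVneq q 0; first by left; rewrite mul0r oppr0.
  case: hw => [/eqP|hw]; first by rewrite (negbTE w0).
  right; rewrite (dvalN hv) (dvalM hv) // vb; have := subring_value_ge0 hRv Rq q0.
  by move: (v q) (v w) hw => m n; lia.
- by move=> w [->|hw] w0 _; [rewrite eqxx in w0 | apply: hcge].
Qed.

Lemma conductor_of_value_ge a : a != 0 -> c <= v a -> conductor v R a.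
Proof.
move=> a0 ha b [->|hb]; first by rewrite mulr0; apply: (subring0 hR).
have [->|b0] := eqVneq b 0; first by rewrite mulr0; apply: (subring0 hR).
apply: mem_R_of_value_ge; first by rewrite mulf_neq0.
by rewrite (dvalM hv) //; move: (v a) (v b) ha hb => m n; lia.
Qed.

Lemma conductor_value_ge a : conductor v R a -> a != 0 -> c <= v a.
Proof.
move=> Ca a0; have [t [t0 vt]] : exists t, t != 0 /\ v t = 1 by case: hv.
apply: hcmin.
  by exists a; split=> //; rewrite -[a]mulr1; apply: Ca; right; rewrite (dval1 hv).
move=> n hn; exists (a * t ^+ `|n - v a|%N); split.
- by apply: Ca; right; rewrite (dvalX hv).
- by rewrite mulf_neq0 // expf_neq0.
- by rewrite (dvalM hv) ?expf_neq0 // (dvalX hv) //; move: (v a) hn => m; lia.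
Qed.

Lemma conductor_ge0 : 0 <= c.
Proof. exact: vset_R_ge0 hc. Qed.

Lemma conductor_gt0 : 0 < c.
Proof.
rewrite lt_neqAle conductor_ge0 andbT; apply/eqP => c_eq0.
case: hnreg => a [[->|va] nRa]; apply: nRa; first exact: (subring0 hR).
have [->|a0] := eqVneq a 0; first exact: (subring0 hR).
by apply: mem_R_of_value_ge; rewrite // -c_eq0.
Qed.

Hypotheses (he0 : 0 < e) (hemin : forall z, vset v R z -> 0 < z -> e <= z)
  (hx : maxid v R x) (x0 : x != 0) (hvx : v x = e).

Local Notation Rm := (colon R (maxid v R)).
Local Notation xRm := (colon (principal R x) (maxid v R)).
Local Notation CxR := (sumset (conductor v R) (principal R x)).

Lemma maxid_value_ge s : maxid v R s -> s != 0 -> e <= v s.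
Proof. by case=> Rs [->|hs] s0; [rewrite eqxx in s0 | apply: hemin => //; exists s]. Qed.

Lemma colon_value_ge a : Rm a -> a != 0 -> - e <= v a.
Proof.
move=> ha a0; have := subring_value_ge0 hRv (ha x hx) (mulf_neq0 a0 x0).
by rewrite (dvalM hv) // hvx; move: (v a) => m; lia.
Qed.

Lemma type_count r : module_length R Rm R r ->
  r = count_int (fun z => vset v Rm (z - e) /\ ~ vset v R (z - e)) 0 (absz (c + e)).
Proof.
move=> hr; rewrite (count_int_shift (fun z => vset v Rm z /\ ~ vset v R z)) sub0r.
apply: (module_length_count hv hR hRv hres (colon_submod hR _) (subring_submod hR) _
  colon_value_ge _ hr).
- by move=> a Ra w [Rw _]; apply: (subringM hR).
- by move=> a a0 ha; apply: mem_R_of_value_ge => //; have := conductor_ge0; lia.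
Qed.

Lemma sumset_conductor_submod : is_submod R CxR.
Proof. by apply: sumset_submod; [apply: colon_submod | apply: principal_submod]. Qed.

Lemma sumset_conductor_sub a : CxR a -> R a.
Proof.
case=> b [_ [Cb [u [Ru ->]] ->]]; apply: (subringD hR).
  by rewrite -[b]mulr1; apply: Cb; right; rewrite (dval1 hv).
by apply: (subringM hR) => //; case: hx.
Qed.


Lemma colength_count n : module_length R R CxR n ->
  n = count_int (fun z => vset v R z /\ ~ vset v CxR z) 0 (absz c).
Proof.
apply: (module_length_count hv hR hRv hres (subring_submod hR) sumset_conductor_submod
  sumset_conductor_sub).
- exact: subring_value_ge0.
- move=> a a0 ha; exists a, 0; split; last by rewrite addr0.
  + by apply: conductor_of_value_ge => //; have := conductor_ge0; lia.
  + by exists 0; split; [apply: (subring0 hR) | rewrite mulr0].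
Qed.

Lemma vset_colon_principal z : vset v xRm z <-> vset v Rm (z - e).
Proof.
split=> -[a [ha a0 va]].
  exists (a / x); split; last by rewrite (dvalMV hv) // hvx va.
  - by move=> w mw; rewrite mulrAC; have [u [Ru ->]] := ha w mw; rewrite mulrAC mulfV // mul1r.
  - by rewrite mulf_neq0 // invr_eq0.
exists (x * a); split; last by rewrite (dvalM hv) // va hvx; lia.
- by move=> w mw; exists (a * w); split; [apply: ha | rewrite mulrA].
- by rewrite mulf_neq0.
Qed.

Lemma sumset_sub_colon a : CxR a -> xRm a.
Proof.
case=> b [_ [Cb [u [Ru ->]] ->]] w mw; exists (b * (w / x) + u * w); split.
  apply: (subringD hR); last by apply: (subringM hR) => //; case: mw.
  apply: Cb; have [->|w0] := eqVneq w 0; first by left; rewrite mul0r.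
  by right; rewrite (dvalMV hv) // hvx subr_ge0; apply: maxid_value_ge.
by field.
Qed.

Lemma vset_sumset_ge z : c <= z -> vset v CxR z.
Proof.
move=> hz; have [a [Ra a0 va]] := hcge hz; exists a; split=> //.
exists a, 0; split; last by rewrite addr0.
  by apply: conductor_of_value_ge; rewrite // va.
by exists 0; split; [apply: (subring0 hR) | rewrite mulr0].
Qed.

Lemma sumset_value_lt z : vset v CxR z -> z < c -> vset v R (z - e).
Proof.
case=> _ [[a [_ [Ca [b [Rb ->]] ->]]] nz vz] zc.
have [b0|b0] := eqVneq b 0.
  move: nz vz; rewrite b0 mulr0 addr0 => a0 va.
  by have := conductor_value_ge Ca a0; lia.
exists b; split=> //.
have [a0|a0] := eqVneq a 0; first by move: vz; rewrite a0 add0r (dvalM hv) // hvx => <-; lia.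
have vlt : v (a + x * b) < v (- a).
  by rewrite (dvalN hv) vz; have := conductor_value_ge Ca a0; lia.
have [_] := dvalD_lt hv nz (or_intror vlt); rewrite addrC addKr (dvalM hv) // hvx vz.
by move=> h; lia.
Qed.

Lemma sumset_value_gt0 z : vset v CxR z -> 0 < z.
Proof.
case=> _ [[a [_ [Ca [b [Rb ->]] ->]]] nz <-]; have c0 := conductor_gt0.
suff: 1 <= v (a + x * b) by lia.
apply: dvalD_ge => //.
  have [->|a0] := eqVneq a 0; [by left | right; have := conductor_value_ge Ca a0; lia].
have [->|b0] := eqVneq b 0; first by left; rewrite mulr0.
by right; rewrite (dvalM hv) // hvx; have := subring_value_ge0 hRv Rb b0; lia.
Qed.

Section BelowBound.

Variable g : int.
Hypothesis hg : forall z, vset v R z -> 0 < z < g -> vset v R (z - e).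

(* Below [g], every value of [m] is [e] plus a value of [R], so the leading
   terms of [s] can be absorbed into [xR] one at a time. *)
Lemma maxid_mod_x s : maxid v R s ->
  exists u, R u /\ (s - x * u = 0 \/ g <= v (s - x * u)).
Proof.
have ok0 s' : s' = 0 \/ g <= v s' -> exists u, R u /\ (s' - x * u = 0 \/ g <= v (s' - x * u)).
  by move=> hs'; exists 0; rewrite mulr0 subr0; split=> //; apply: (subring0 hR).
suff: forall n : nat, forall s, maxid v R s -> g - v s <= n%:Z ->
    exists u, R u /\ (s - x * u = 0 \/ g <= v (s - x * u)).
  move=> H ms; have [->|s0] := eqVneq s 0; first by apply: ok0; left.
  by apply: (H `|g - v s|%N) => //; lia.
elim=> [|n IH] {}s ms hs; first by apply: ok0; right; lia.
have [->|s0] := eqVneq s 0; first by apply: ok0; left.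
have [hgs|hgs] := lerP g (v s); first by apply: ok0; right.
have [Rs _] := ms; have es := maxid_value_ge ms s0.
have [b [Rb b0 vb]] : vset v R (v s - e) by apply: hg; [exists s | lia].
have xb0 : x * b != 0 by rewrite mulf_neq0.
have [w [Rw hw]] : exists w, R w /\ (s - w * (x * b) = 0 \/ v s < v (s - w * (x * b))).
  by apply: (cancel_leading_term hv hres s0 xb0); rewrite (dvalM hv) // hvx vb; lia.
have Rs' : R (s - w * (x * b)).
  by apply: (subringB hR) => //; do 2 apply: (subringM hR) => //; case: hx.
have [u [Ru hu]] : exists u, R u /\ (s - w * (x * b) - x * u = 0 \/
    g <= v (s - w * (x * b) - x * u)).
  case: hw => [->|hw]; first by apply: ok0; left.
  have [s'0|s'0] := eqVneq (s - w * (x * b)) 0; first by apply: ok0; left.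
  apply: IH; first by split=> //; right; lia.
  by move: (v s) (v (s - w * (x * b))) hs hw => m m'; lia.
exists (w * b + u); split; first by apply: (subringD hR) => //; apply: (subringM hR).
by have -> : s - x * (w * b + u) = s - w * (x * b) - x * u by ring.
Qed.

Lemma mem_colon_principal z : vset v R z -> c + e <= z + g -> vset v xRm z.
Proof.
case=> a [Ra a0 va] hz; exists a; split=> // w mw.
have [u [Ru hu]] := maxid_mod_x mw.
exists (a * u + a * (w - x * u) / x); split; last by field.
apply: (subringD hR); first exact: (subringM hR).
have [->|nz] := eqVneq (w - x * u) 0; first by rewrite mulr0 mul0r; apply: (subring0 hR).
case: hu => [/eqP|hu]; first by rewrite (negbTE nz).
apply: mem_R_of_value_ge; first by rewrite !mulf_neq0 // invr_eq0.
rewrite (dvalMV hv) ?mulf_neq0 // (dvalM hv) // hvx va.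
by move: (v (w - x * u)) hu => q; lia.
Qed.

End BelowBound.

Lemma vset_R0 : vset v R 0.
Proof. by exists 1; split; [apply: (subring1 hR) | apply: oner_neq0 | apply: (dval1 hv)]. Qed.

Lemma vset_RD z1 z2 : vset v R z1 -> vset v R z2 -> vset v R (z1 + z2).
Proof.
case=> a [Ra a0 <-] [b [Rb b0 <-]]; exists (a * b).
by rewrite (dvalM hv) // mulf_neq0 //; split=> //; apply: (subringM hR).
Qed.

Lemma count_notin_xRm_add_type r : module_length R Rm R r ->
  (count_int (fun z => vset v R z /\ ~ vset v xRm z) 0 (absz (c + e)%R) + r = absz e)%N.
Proof.
move=> /type_count ->.
have We : vset v R e by exists x; case: hx.
have RRm a : R a -> Rm a by move=> Ra w [Rw _]; apply: (subringM hR).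
rewrite -(apery_count he0 vset_R0 We vset_RD vset_R_ge0 hcge).
rewrite (count_int_split (apery (vset v R) e) (fun z => vset v Rm (z - e))) addnC.
congr (_ + _)%N; apply: eq_count_int => z _; split.
- case=> Rmz nW; split=> //; split=> //; case: Rmz => b [Rmb b0 vb].
  exists (b * x); rewrite (dvalM hv) // vb hvx mulf_neq0 //.
  by split=> //; [apply: Rmb | lia].
- by case=> -[_ nW] Rmz; split.
- case=> Wz nxRm; have nRm : ~ vset v Rm (z - e) by move/vset_colon_principal.
  by split=> //; split=> // /(vset_sub RRm).
- by case=> -[Wz _] nRm; split=> // /vset_colon_principal.
Qed.

Section Gaps.

Hypotheses (hk : (1 < k)%N)
  (hymono : forall i j, (1 <= i)%N -> (i < j)%N -> (j <= k.-1)%N -> y i < y j)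
  (hy : forall z, (vset v R z /\ ~ vset v CxR z /\ z != 0) <->
                  exists2 i, (1 <= i <= k.-1)%N & z = y i).

Local Notation yset := (fun z => z = 0 \/ exists2 i, (1 <= i <= k.-1)%N & z = y i).
Local Notation notin_xRm := (fun z => vset v R z /\ ~ vset v xRm z).

Lemma index1_le : (1 <= 1 <= k.-1)%N.
Proof. by rewrite leqnn; case: (k) hk. Qed.

Lemma y_lt_conductor i : (1 <= i <= k.-1)%N -> y i < c.
Proof.
move=> hi; have [_ [nJ _]] := proj2 (hy (y i)) (ex_intro2 _ _ i hi erefl).
by rewrite ltNge; apply/negP => /vset_sumset_ge.
Qed.

Lemma y1_le i : (1 <= i <= k.-1)%N -> y 1 <= y i.
Proof.
case/andP=> i1 ik; have [lt1i|] := ltnP 1 i; first by apply/ltW/hymono.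
by move=> le_i1; have -> : i = 1%N by apply/eqP; rewrite eqn_leq le_i1 i1.
Qed.

Lemma values_below_y1 z : vset v R z -> 0 < z < y 1 -> vset v R (z - e).
Proof.
move=> Wz /andP[z0 zy]; apply: contrapT => nWz.
have zc : z < c by apply: lt_trans zy (y_lt_conductor index1_le).
have [i hi zE] : exists2 i, (1 <= i <= k.-1)%N & z = y i.
  by apply/hy; split=> //; split; [move/sumset_value_lt => /(_ zc) | rewrite gt_eqF].
by have := y1_le hi; rewrite -zE leNgt zy.
Qed.

Lemma yset_count : module_length R R CxR k -> k = count_int yset 0 (absz (c + e)).
Proof.
move=> /colength_count kE; rewrite {1}kE -(@count_int_widen _ _ (absz c) (absz (c + e))).
- apply: eq_count_int => z _ /=; split.
    by case=> Wz nJ; have [->|z0] := eqVneq z 0; [left | right; apply/hy].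
  case=> [->|/hy[Wz [nJ _]] //]; split; first exact: vset_R0.
  by move/sumset_value_gt0; rewrite ltxx.
- by have := conductor_ge0; lia.
- by move=> z hz [_]; apply; apply: vset_sumset_ge; lia.
Qed.

Lemma notin_xRm_sub_yset z : notin_xRm z -> yset z.
Proof.
case=> Wz nxRm; have [->|z0] := eqVneq z 0; [by left | right; apply/hy].
by split=> //; split=> // /(vset_sub sumset_sub_colon).
Qed.

Lemma yset_window z : yset z -> 0 <= z < 0 + (absz (c + e))%:Z.
Proof.
have c0 := conductor_ge0; case=> [->|[i hi ->]]; first by lia.
have [Wy _] := proj2 (hy (y i)) (ex_intro2 _ _ i hi erefl).
by have := y_lt_conductor hi; have := vset_R_ge0 Wy; lia.
Qed.

Lemma type_eq_iff r : module_length R Rm R r -> module_length R R CxR k ->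
  r%:Z = e - k%:Z <-> (forall z, notin_xRm z <-> yset z).
Proof.
move=> /count_notin_xRm_add_type hr /yset_count hk'; split=> [hre z|hS].
  split; first exact: notin_xRm_sub_yset.
  move=> gz; apply: (@count_int_eq_sub notin_xRm yset 0 (absz (c + e)) _ _ z (yset_window gz) gz).
    by move=> w _; apply: notin_xRm_sub_yset.
  by rewrite -hk'; lia.
rewrite hk' -(@eq_count_int notin_xRm) //; lia.
Qed.

Lemma notin_xRm_add_y1_lt z : notin_xRm z -> y 1 + z < c + e.
Proof.
case=> Wz nxRm; rewrite ltNge; apply/negP => hz; apply: nxRm.
by apply: (mem_colon_principal values_below_y1 Wz); rewrite [z + _]addrC.
Qed.

Lemma exists_y_notin_xRm r : module_length R Rm R r -> r%:Z < e - 1 ->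
  exists2 i, (1 <= i <= k.-1)%N & notin_xRm (y i).
Proof.
move=> /count_notin_xRm_add_type hr hre.
have h2 : (1 < count_int (fun z => vset v R z /\ ~ vset v xRm z) 0 (absz (c + e)%R))%N.
  by lia.
have [z Sz z0] := count_int_ge2 h2.
case: (notin_xRm_sub_yset Sz) => [//|[i hi zE]].
by exists i; rewrite -?zE.
Qed.

Section Quotient.

Hypotheses (hpl : c - e <= p * e) (hpu : p * e < c)
  (hl : forall i, (1 <= i <= k.-1)%N ->
     [/\ 0 <= l i, y i + l i * e < c & c <= y i + (l i + 1) * e]).

Lemma bounds_of_type_lt r : module_length R Rm R r -> r%:Z < e - 1 ->
  [/\ 2 * y 1%N < c + e, p <= 2 * l 1%N + 2 &
      (p = 2 * l 1%N + 2 -> 0 < (p + 1) * e - c)].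
Proof.
move=> hr hre; have [i hi Si] := exists_y_notin_xRm hr hre.
have y1_lt : 2 * y 1%N < c + e.
  by have := notin_xRm_add_y1_lt Si; have := y1_le hi; lia.
have [_ _ hc1] := hl index1_le.
have [hp hp_eq] := quotient_le_of_sum_lt he0 hpl hpu hc1 hc1 (ltac:(lia)).
by split=> // [|hp2]; [lia | apply: hp_eq; lia].
Qed.

Lemma bounds_of_type_eq r : module_length R Rm R r -> module_length R R CxR k ->
  r%:Z = e - k%:Z ->
  [/\ (forall j, (1 <= j <= k.-1)%N -> y 1%N + y j < c + e),
      p <= l 1%N + l k.-1 + 2 &
      (p = l 1%N + l k.-1 + 2 -> 0 < (p + 1) * e - c)].
Proof.
move=> hr hk' /(type_eq_iff hr hk') hS.
have y1_lt j : (1 <= j <= k.-1)%N -> y 1%N + y j < c + e.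
  by move=> hj; apply: notin_xRm_add_y1_lt; apply/hS; right; exists j.
have kk : (1 <= k.-1 <= k.-1)%N by rewrite leqnn andbT; case/andP: index1_le.
have [_ _ hc1] := hl index1_le; have [_ _ hck] := hl kk.
by have [] := quotient_le_of_sum_lt he0 hpl hpu hc1 hck (y1_lt _ kk); split.
Qed.

End Quotient.

End Gaps.

End Setting.

Theorem proposition1p11 (K : fieldType) (v : K -> int) (R : K -> Prop)
    (c e p : int) (r k : nat) (x : K) (y l : nat -> int) :
  setting v R ->
  (* c: least element of v(R) with c + N ⊆ v(R) *)
  vset v R c -> (forall n, c <= n -> vset v R n) ->
  (forall c', vset v R c' -> (forall n, c' <= n -> vset v R n) -> c <= c') ->
  (* e: least positive element of v(R) *)
  vset v R e -> 0 < e -> (forall z, vset v R z -> 0 < z -> e <= z) ->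
  (* x in m with v(x) = e *)
  maxid v R x -> x != 0 -> v x = e ->
  (* r = l_R((R :_K m)/R) *)
  module_length R (colon R (maxid v R)) R r ->
  (* k = l_R(R/(C + xR)) *)
  module_length R R (sumset (conductor v R) (principal R x)) k ->
  (1 < k)%N ->
  c - e <= p * e -> p * e < c ->
  (forall i j, (1 <= i)%N -> (i < j)%N -> (j <= k.-1)%N -> y i < y j) ->
  (forall z, (vset v R z /\ ~ vset v (sumset (conductor v R) (principal R x)) z
              /\ z != 0) <-> exists2 i, (1 <= i <= k.-1)%N & z = y i) ->
  (forall i, (1 <= i <= k.-1)%N ->
     [/\ 0 <= l i, y i + l i * e < c & c <= y i + (l i + 1) * e]) ->
  [/\ (r%:Z = e - k%:Z <->
        (forall z, (vset v R z /\ ~ vset v (colon (principal R x) (maxid v R)) z)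
                   <-> (z = 0 \/ exists2 i, (1 <= i <= k.-1)%N & z = y i))),
      (r%:Z < e - 1 ->
        [/\ 2 * y 1%N < c + e, p <= 2 * l 1%N + 2 &
            (p = 2 * l 1%N + 2 -> 0 < (p + 1) * e - c)]),
      (r%:Z = e - k%:Z ->
        [/\ (forall j, (1 <= j <= k.-1)%N -> y 1%N + y j < c + e),
            p <= l 1%N + l k.-1 + 2 &
            (p = l 1%N + l k.-1 + 2 -> 0 < (p + 1) * e - c)]) &
      (3 <= p -> forall i, (1 <= i <= k.-1)%N -> l i = 0 -> c + e < 2 * y i)].
Proof.
move=> [hv hR hRv hfrac [hfg hnreg hres]] hc hcge hcmin _ he0 hemin hx x0 hvx hr hk
  hk1 hpl hpu hymono hy hl.
split.
- exact: (@type_eq_iff _ v R c e x).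
- exact: (@bounds_of_type_lt _ v R c e x k).
- exact: (@bounds_of_type_eq _ v R c e x).
- move=> hp3 i hi li0; have [_ _] := hl i hi; rewrite li0 add0r mul1r.
  exact: twice_gt_of_quotient_ge3 he0 hp3 hpu.
Qed.
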